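(* Let $\mathcal S$ and $\mathcal T$ be additive categories and let $T:\mathcal S\to\mathcal T$ be an additive functor. (a) If $T$ has a left adjoint $S_\ell$, then an object $Q$ of $\mathcal S$ is $T$-relative projective if and only if the counit $\eta_Q:S_\ell TQ\to Q$ of the adjunction is an epimorphism. Any object of $\mathrm{add}(\mathrm{im}(S_\ell))$ is $T$-relative projective. (b) If $T$ has a right adjoint $S_r$, then an object $Q$ of $\mathcal S$ is $T$-relative injective if and only if the unit $\epsilon_Q:Q\to S_rTQ$ of the adjunction is a monomorphism. Any object of $\mathrm{add}(\mathrm{im}(S_r))$ is $T$-relative injective.
   Context: An object $Q$ of $\mathcal S$ is $T$-relative projective if the natural transformation $\mathcal S(Q,-)\to\mathcal T(TQ,T-)$ induced by $T$ is injective (componentwise), and $T$-relative injective if the natural transformation $\mathcal S(-,Q)\to\mathcal T(T-,TQ)$ induced by $T$ is injective. $\mathrm{add}(\mathrm{im}(F))$ denotes the full subcategory of direct summands of finite direct sums of objects in the image of $F$. *)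

From HB Require Import structures.
From mathcomp Require Import all_boot all_algebra.
Set Implicit Arguments. Unset Strict Implicit. Unset Printing Implicit Defensive.
Import GRing.Theory.
Local Open Scope ring_scope.

Record category := Category {
  Ob : Type;
  Hom : Ob -> Ob -> zmodType;
  idm : forall A, Hom A A;
  comp : forall A B C, Hom B C -> Hom A B -> Hom A C;
  comp1m : forall A B (f : Hom A B), comp (idm B) f = f;
  compm1 : forall A B (f : Hom A B), comp f (idm A) = f;
  compA : forall A B C D (h : Hom C D) (g : Hom B C) (f : Hom A B),
    comp h (comp g f) = comp (comp h g) f
}.
Arguments Hom : clear implicits.
Arguments idm {c} A.
Arguments comp {c A B C}.

Definition preadditive (C : category) : Prop :=
  (forall A B D (g1 g2 : Hom C B D) (f : Hom C A B),
      comp (g1 + g2) f = comp g1 f + comp g2 f) /\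
  (forall A B D (g : Hom C B D) (f1 f2 : Hom C A B),
      comp g (f1 + f2) = comp g f1 + comp g f2).

Definition is_zero_object (C : category) (Z : Ob C) : Prop := idm Z = 0.

Definition is_biproduct (C : category) (A B X : Ob C)
  (i1 : Hom C A X) (i2 : Hom C B X) (p1 : Hom C X A) (p2 : Hom C X B) : Prop :=
  [/\ comp p1 i1 = idm A, comp p2 i2 = idm B, comp p1 i2 = 0, comp p2 i1 = 0
    & comp i1 p1 + comp i2 p2 = idm X].

Definition has_biproduct (C : category) (A B X : Ob C) : Prop :=
  exists i1 i2 p1 p2, @is_biproduct C A B X i1 i2 p1 p2.

Definition additive (C : category) : Prop :=
  [/\ preadditive C, exists Z : Ob C, is_zero_object Z
    & forall A B : Ob C, exists X : Ob C, has_biproduct A B X].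

Record functor (C D : category) := Functor {
  fobj : Ob C -> Ob D;
  fmap : forall A B, Hom C A B -> Hom D (fobj A) (fobj B);
  fmap1 : forall A, fmap (idm A) = idm (fobj A);
  fmapM : forall A B E (g : Hom C B E) (f : Hom C A B),
    fmap (comp g f) = comp (fmap g) (fmap f)
}.
Arguments fobj {C D}.
Arguments fmap {C D} _ {A B}.

Definition additive_functor (C D : category) (F : functor C D) : Prop :=
  forall A B (f g : Hom C A B), fmap F (f + g) = fmap F f + fmap F g.

Definition is_adjunction (C D : category) (L : functor C D) (R : functor D C)
  (unit : forall c : Ob C, Hom C c (fobj R (fobj L c)))
  (counit : forall d : Ob D, Hom D (fobj L (fobj R d)) d) : Prop :=
  [/\ (forall c c' (f : Hom C c c'),
         comp (unit c') f = comp (fmap R (fmap L f)) (unit c)),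
      (forall d d' (g : Hom D d d'),
         comp (counit d') (fmap L (fmap R g)) = comp g (counit d)),
      (forall c, comp (counit (fobj L c)) (fmap L (unit c)) = idm (fobj L c))
    & (forall d, comp (fmap R (counit d)) (unit (fobj R d)) = idm (fobj R d))].

Definition epimorphism (C : category) (A B : Ob C) (e : Hom C A B) : Prop :=
  forall Z (f g : Hom C B Z), comp f e = comp g e -> f = g.

Definition monomorphism (C : category) (A B : Ob C) (m : Hom C A B) : Prop :=
  forall Z (f g : Hom C Z A), comp m f = comp m g -> f = g.

(* T-relative projective / injective: the maps induced by T on hom-sets
   S(Q,-) -> T(TQ,T-) (resp. S(-,Q) -> T(T-,TQ)) are injective. *)
Definition rel_projective (S T : category) (F : functor S T) (Q : Ob S) : Prop :=
  forall X : Ob S, injective (fun f : Hom S Q X => fmap F f).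

Definition rel_injective (S T : category) (F : functor S T) (Q : Ob S) : Prop :=
  forall X : Ob S, injective (fun f : Hom S X Q => fmap F f).

Inductive fin_direct_sum (C : category) (P : Ob C -> Prop) : Ob C -> Prop :=
  | fds_zero : forall Z, is_zero_object Z -> fin_direct_sum P Z
  | fds_cons : forall A B X, P A -> fin_direct_sum P B ->
      has_biproduct A B X -> fin_direct_sum P X.

Definition direct_summand (C : category) (Q X : Ob C) : Prop :=
  exists (i : Hom C Q X) (p : Hom C X Q), comp p i = idm Q.

Definition in_add_im (D C : category) (F : functor D C) (Q : Ob C) : Prop :=
  exists X, fin_direct_sum (fun A => exists Y, A = fobj F Y) X /\
            direct_summand Q X.

Arguments is_adjunction {C D} L R unit counit.
Arguments epimorphism {C A B} e.
Arguments monomorphism {C A B} m.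
Arguments rel_projective {S T} F Q.
Arguments rel_injective {S T} F Q.
Arguments in_add_im {D C} F Q.
Arguments additive_functor {C D} F.

From Pilot Require Import Defs.
From mathcomp Require Import all_boot ssralg.

(* (a) By a triangle identity, [T f = T(f o eta_Q) o eps_TQ] for every
   [f : Q -> X], so [f o eta_Q = g o eta_Q] implies [T f = T g]; conversely,
   by naturality of [eta], [T f = T g] implies [f o eta_Q = g o eta_Q].  Hence
   [T] is faithful on [S(Q,-)] iff [eta_Q] is epi.  The other triangle identity
   splits [eta_{S_l Y}], and relative projectivity passes to zero objects,
   biproducts and direct summands, as maps out of these are determined by
   their composites with the structure maps.
   (b) is (a) for [T^op], whose left adjoint is [S_r^op], with unit and counit
   exchanged. *)

Set Implicit Arguments.
Unset Strict Implicit.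
Unset Printing Implicit Defensive.
Local Open Scope ring_scope.

Local Notation comp := (@Defs.comp _ _ _ _).
Local Notation compA := Defs.compA.

Section Preadditive.
Variable C : category.
Hypothesis addC : preadditive C.
Import GRing.Theory.

Lemma compm0 A B D (g : Hom C B D) : comp g (0 : Hom C A B) = 0.
Proof.
case: addC => _ compDr; apply: (@addrI _ (comp g 0)).
by rewrite -compDr !addr0.
Qed.

Lemma comp0m A B D (f : Hom C A B) : comp (0 : Hom C B D) f = 0.
Proof.
case: addC => compDl _; apply: (@addrI _ (comp 0 f)).
by rewrite -compDl !addr0.
Qed.

End Preadditive.

Lemma split_epimorphism (C : category) A B (e : Hom C A B) (s : Hom C B A) :
  comp e s = idm B -> epimorphism e.
Proof.
move=> es Z f g fe_ge.
by rewrite -(compm1 f) -(compm1 g) -es !compA fe_ge.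
Qed.

Section RelativeProjective.
Variables (S T : category) (F : functor S T).

Lemma rel_projective_summand Q X :
  direct_summand Q X -> rel_projective F X -> rel_projective F Q.
Proof.
case=> i [p /split_epimorphism epi_p] projX Z f g /= Ff_Fg.
by apply: epi_p; apply: projX; rewrite /= !fmapM Ff_Fg.
Qed.

Hypothesis addS : preadditive S.

Lemma rel_projective_zero Z : is_zero_object Z -> rel_projective F Z.
Proof.
move=> Z0 X f g _.
by rewrite -(compm1 f) -(compm1 g) Z0 !compm0.
Qed.

Lemma rel_projective_biproduct A B X : has_biproduct A B X ->
  rel_projective F A -> rel_projective F B -> rel_projective F X.
Proof.
case=> i1 [i2 [p1 [p2 [_ _ _ _ ip]]]] projA projB Z f g /= Ff_Fg.
have fi1 : comp f i1 = comp g i1 by apply: projA => /=; rewrite !fmapM Ff_Fg.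
have fi2 : comp f i2 = comp g i2 by apply: projB => /=; rewrite !fmapM Ff_Fg.
case: addS => _ compDr.
by rewrite -(compm1 f) -(compm1 g) -ip !compDr !compA fi1 fi2.
Qed.

Lemma rel_projective_fin_direct_sum (P : Ob S -> Prop) X :
  (forall A, P A -> rel_projective F A) ->
  fin_direct_sum P X -> rel_projective F X.
Proof.
move=> projP; elim=> [Z /rel_projective_zero // | A B Y PA _ projB AB].
exact: rel_projective_biproduct AB (projP _ PA) projB.
Qed.

Lemma rel_projective_add_im (D : category) (G : functor D S) Q :
  (forall Y, rel_projective F (fobj G Y)) ->
  in_add_im G Q -> rel_projective F Q.
Proof.
move=> projG [X [sumX QX]]; apply: rel_projective_summand QX _.
by apply: rel_projective_fin_direct_sum sumX => _ [Y ->].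
Qed.

End RelativeProjective.

Section LeftAdjoint.
Variables (C D : category) (L : functor C D) (R : functor D C).
Variables (unit : forall c, Hom C c (fobj R (fobj L c)))
          (counit : forall d, Hom D (fobj L (fobj R d)) d).
Hypothesis adj : is_adjunction L R unit counit.

Lemma rel_projective_counit_epi Q :
  rel_projective R Q <-> epimorphism (counit Q).
Proof.
case: adj => _ counitN _ triangleR; split.
- move=> projQ Z f g fe_ge; apply: projQ => /=.
  rewrite -(compm1 (fmap R f)) -(compm1 (fmap R g)) -triangleR.
  by rewrite !compA -!fmapM fe_ge.
- by move=> epiQ X f g /= Rf_Rg; apply: epiQ; rewrite -!counitN Rf_Rg.
Qed.

Lemma rel_projective_left_adjoint c : rel_projective R (fobj L c).
Proof.
apply/rel_projective_counit_epi/split_epimorphism.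
by case: adj => _ _ triangleL _; apply: triangleL.
Qed.

End LeftAdjoint.

Theorem rel_projective_adjunction (S T : category) (F : functor S T)
    (Sl : functor T S) unit counit :
  preadditive S -> is_adjunction Sl F unit counit ->
  (forall Q, rel_projective F Q <-> epimorphism (counit Q)) /\
  (forall Q, in_add_im Sl Q -> rel_projective F Q).
Proof.
move=> addS adj; split=> Q; first exact: rel_projective_counit_epi adj Q.
by apply: rel_projective_add_im => // Y; apply: rel_projective_left_adjoint adj Y.
Qed.

Definition op_cat (C : category) : category :=
  @Category (Ob C) (fun A B => Hom C B A) (@idm C)
    (fun A B D g f => comp f g)
    (fun A B f => compm1 f) (fun A B f => comp1m f)
    (fun A B D E h g f => esym (compA f g h)).

Definition op_functor (C D : category) (F : functor C D) :
    functor (op_cat C) (op_cat D) :=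
  @Functor (op_cat C) (op_cat D) (fobj F) (fun A B f => fmap F f)
    (fmap1 F) (fun A B E g f => fmapM F f g).

Lemma preadditive_op (C : category) : preadditive C -> preadditive (op_cat C).
Proof. by case=> compDl compDr; split=> *; [apply: compDr | apply: compDl]. Qed.

Lemma adjunction_op (C D : category) (L : functor C D) (R : functor D C)
    unit counit :
  is_adjunction L R unit counit ->
  is_adjunction (op_functor R) (op_functor L) counit unit.
Proof.
by case=> unitN counitN triangleL triangleR; split=> *; rewrite /= ?unitN ?counitN.
Qed.

Lemma fin_direct_sum_op (C : category) (P : Ob C -> Prop) X :
  fin_direct_sum P X -> @fin_direct_sum (op_cat C) P X.
Proof.
elim=> [Z Z0 | A B Y PA _ sumB [i1 [i2 [p1 [p2 [? ? ? ? ?]]]]]].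
  exact: fds_zero.
by apply: fds_cons PA sumB _; exists p1, p2, i1, i2.
Qed.

Lemma in_add_im_op (C D : category) (G : functor D C) Q :
  in_add_im G Q -> in_add_im (op_functor G) Q.
Proof.
case=> X [sumX [i [p pi]]]; exists X; split; last by exists p, i.
exact: fin_direct_sum_op sumX.
Qed.

Theorem rel_injective_adjunction (S T : category) (F : functor S T)
    (Sr : functor T S) unit counit :
  preadditive S -> is_adjunction F Sr unit counit ->
  (forall Q, rel_injective F Q <-> monomorphism (unit Q)) /\
  (forall Q, in_add_im Sr Q -> rel_injective F Q).
Proof.
(* [rel_injective F] and [monomorphism] in [S] are, by conversion,
   [rel_projective (op_functor F)] and [epimorphism] in [op_cat S]. *)
move=> /preadditive_op addSop /adjunction_op adj.
have [unit_mono add_im_inj] := rel_projective_adjunction addSop adj.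
by split=> // Q /in_add_im_op; apply: add_im_inj.
Qed.

Theorem lemma2p6 (S T : category) (F : functor S T) :
  additive S -> additive T -> additive_functor F ->
  (forall (Sl : functor T S)
          (unit : forall Y : Ob T, Hom T Y (fobj F (fobj Sl Y)))
          (counit : forall Q : Ob S, Hom S (fobj Sl (fobj F Q)) Q),
      is_adjunction Sl F unit counit ->
      (forall Q : Ob S, rel_projective F Q <-> epimorphism (counit Q)) /\
      (forall Q : Ob S, in_add_im Sl Q -> rel_projective F Q)) /\
  (forall (Sr : functor T S)
          (unit : forall Q : Ob S, Hom S Q (fobj Sr (fobj F Q)))
          (counit : forall Y : Ob T, Hom T (fobj F (fobj Sr Y)) Y),
      is_adjunction F Sr unit counit ->
      (forall Q : Ob S, rel_injective F Q <-> monomorphism (unit Q)) /\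
      (forall Q : Ob S, in_add_im Sr Q -> rel_injective F Q)).
Proof.
case=> addS _ _ _ _; split=> ? ? ?.
- exact: rel_projective_adjunction.
- exact: rel_injective_adjunction.
Qed.
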